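(* $\mathsf{G3iLL}$ has sequent interpolation: for all finite multisets of formulas $\Gamma,\Gamma'$ and every multiset $\Delta$ of at most one formula, if $\Gamma,\Gamma'\Rightarrow\Delta$ is derivable in $\mathsf{G3iLL}$, then there is a formula $\chi$ such that $\Gamma\Rightarrow\chi$ and $\Gamma',\chi\Rightarrow\Delta$ are derivable in $\mathsf{G3iLL}$ and every atom occurring in $\chi$ occurs both in $\Gamma$ and in $\Gamma'\cup\Delta$.
   Context: Formulas are built from the constant $\bot$ and propositional atoms (with $\bot$ not an atom) using $\wedge,\vee,\to$ and a unary modal operator $\bigcirc$. A sequent is $\Gamma\Rightarrow\Delta$ with $\Gamma,\Delta$ finite multisets of formulas, $\Delta$ containing at most one formula. The calculus $\mathsf{G3iLL}$ has axioms $\Gamma,p\Rightarrow p$ ($p$ an atom) and $\Gamma,\bot\Rightarrow\Delta$, and rules (premisses / conclusion): $R\wedge$: $\Gamma\Rightarrow\phi$, $\Gamma\Rightarrow\psi$ / $\Gamma\Rightarrow\phi\wedge\psi$; $L\wedge$: $\Gamma,\phi,\psi\Rightarrow\Delta$ / $\Gamma,\phi\wedge\psi\Rightarrow\Delta$; $R\vee$: $\Gamma\Rightarrow\phi_i$ / $\Gamma\Rightarrow\phi_0\vee\phi_1$ ($i=0,1$); $L\vee$: $\Gamma,\phi\Rightarrow\Delta$, $\Gamma,\psi\Rightarrow\Delta$ / $\Gamma,\phi\vee\psi\Rightarrow\Delta$; $R\to$: $\Gamma,\phi\Rightarrow\psi$ / $\Gamma\Rightarrow\phi\to\psi$; $L\to$: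 $\Gamma,\phi\to\psi\Rightarrow\phi$, $\Gamma,\psi\Rightarrow\Delta$ / $\Gamma,\phi\to\psi\Rightarrow\Delta$; $R\bigcirc$: $\Gamma\Rightarrow\phi$ / $\Gamma\Rightarrow\bigcirc\phi$; $L\bigcirc$: $\Gamma,\psi\Rightarrow\bigcirc\phi$ / $\Gamma,\bigcirc\psi\Rightarrow\bigcirc\phi$. *)

From Stdlib Require Import List Permutation.
Import ListNotations.

Inductive form : Type :=
| Bot : form
| Var : nat -> form
| And : form -> form -> form
| Or  : form -> form -> form
| Imp : form -> form -> form
| Circ : form -> form.

(* Sequents Gamma => Delta: Gamma a finite multiset (list taken up to
   permutation), Delta at most one formula (option form).
   "Gamma, phi" is represented by any list that is a permutation of
   phi :: Gamma. *)
Inductive G3iLL : list form -> option form -> Prop :=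
| Ax : forall G G' p, Permutation G' (Var p :: G) -> G3iLL G' (Some (Var p))
| LBot : forall G G' D, Permutation G' (Bot :: G) -> G3iLL G' D
| RAnd : forall G a b, G3iLL G (Some a) -> G3iLL G (Some b) -> G3iLL G (Some (And a b))
| LAnd : forall G G' a b D, Permutation G' (And a b :: G) ->
    G3iLL (a :: b :: G) D -> G3iLL G' D
| ROr0 : forall G a b, G3iLL G (Some a) -> G3iLL G (Some (Or a b))
| ROr1 : forall G a b, G3iLL G (Some b) -> G3iLL G (Some (Or a b))
| LOr : forall G G' a b D, Permutation G' (Or a b :: G) ->
    G3iLL (a :: G) D -> G3iLL (b :: G) D -> G3iLL G' D
| RImp : forall G a b, G3iLL (a :: G) (Some b) -> G3iLL G (Some (Imp a b))
| LImp : forall G G' a b D, Permutation G' (Imp a b :: G) ->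
    G3iLL (Imp a b :: G) (Some a) -> G3iLL (b :: G) D -> G3iLL G' D
| RCirc : forall G a, G3iLL G (Some a) -> G3iLL G (Some (Circ a))
| LCirc : forall G G' a b, Permutation G' (Circ b :: G) ->
    G3iLL (b :: G) (Some (Circ a)) -> G3iLL G' (Some (Circ a)).

Fixpoint atoms (f : form) : list nat :=
  match f with
  | Bot => []
  | Var p => [p]
  | And a b | Or a b | Imp a b => atoms a ++ atoms b
  | Circ a => atoms a
  end.

Definition occurs_in_ctx (p : nat) (G : list form) : Prop :=
  exists f, In f G /\ In p (atoms f).

Definition occurs_in_succ (p : nat) (D : option form) : Prop :=
  match D with Some f => In p (atoms f) | None => False end.

(* Maehara's method: by induction on a derivation of [L => D], every split of [L]
   into [G, G'] has an interpolant, the split being arbitrary in each premise.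
   Right rules keep the interpolant of their premise (R/\ conjoins the two).  A left
   rule whose principal formula lies in [G'] keeps it too, conjoining the two
   interpolants of a branching rule; on the [G] side L\/ gives their disjunction,
   L-> gives [c1 -> c2], where [c1] interpolates the left premise with the roles of
   [G] and [G'] exchanged, and Lo gives [o c], derivable from [G] because Lo applies
   to any [o]-succedent.  Axioms with principal formula in [G'] get [Bot -> Bot]. *)

From Stdlib Require Import List Permutation.
Import ListNotations.

Ltac prefix_before a l :=
  lazymatch l with
  | a :: _ => constr:(@nil form)
  | ?x :: ?r => let p := prefix_before a r in constr:(x :: p)
  end.

(* Proves [Permutation l r] when [l] and [r] are cons-lists over a common tail
   whose heads agree up to order. *)
Ltac perm_solve :=
  simpl;
  lazymatch goal with
  | |- Permutation ?l ?l => reflexivity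
  | |- Permutation (?a :: _) ?r =>
      let p := prefix_before a r in
      apply (Permutation_cons_app p); perm_solve
  end.

Lemma G3iLL_perm {L L' D} : G3iLL L D -> Permutation L L' -> G3iLL L' D.
Proof.
  intros Hder; revert L'; induction Hder; intros L' HL.
  - eapply Ax. rewrite <- HL. eassumption.
  - eapply LBot. rewrite <- HL. eassumption.
  - apply RAnd; auto.
  - eapply LAnd; [rewrite <- HL|]; eassumption.
  - apply ROr0; auto.
  - apply ROr1; auto.
  - eapply LOr; [rewrite <- HL| |]; eassumption.
  - apply RImp; auto.
  - eapply LImp; [rewrite <- HL| |]; eassumption.
  - apply RCirc; auto.
  - eapply LCirc; [rewrite <- HL|]; eassumption.
Qed.

Ltac exchange H := apply (G3iLL_perm H); perm_solve.

Lemma G3iLL_weaken x {L D} : G3iLL L D -> G3iLL (x :: L) D.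
Proof.
  intros HL; revert x; induction HL; intros x.
  - apply (Ax (x :: G)). rewrite H. perm_solve.
  - apply (LBot (x :: G)). rewrite H. perm_solve.
  - apply RAnd; auto.
  - apply (LAnd (x :: G) _ a b); [rewrite H; perm_solve|]. exchange (IHHL x).
  - apply ROr0; auto.
  - apply ROr1; auto.
  - apply (LOr (x :: G) _ a b); [rewrite H; perm_solve| |].
    + exchange (IHHL1 x).
    + exchange (IHHL2 x).
  - apply RImp. exchange (IHHL x).
  - apply (LImp (x :: G) _ a b); [rewrite H; perm_solve| |].
    + exchange (IHHL1 x).
    + exchange (IHHL2 x).
  - apply RCirc; auto.
  - apply (LCirc (x :: G) _ a b); [rewrite H; perm_solve|]. exchange (IHHL x).
Qed.

Definition Top : form := Imp Bot Bot.

Lemma G3iLL_Top L : G3iLL L (Some Top).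
Proof. apply RImp. apply (LBot L). reflexivity. Qed.

Lemma occurs_in_ctx_perm p L L' :
  Permutation L L' -> occurs_in_ctx p L -> occurs_in_ctx p L'.
Proof.
  intros HL [f [Hf Hp]]. exists f. split; [apply (Permutation_in _ HL)|]; assumption.
Qed.

Lemma occurs_in_ctx_cons p f L :
  occurs_in_ctx p (f :: L) <-> In p (atoms f) \/ occurs_in_ctx p L.
Proof.
  unfold occurs_in_ctx; simpl; split.
  - intros [g [[<- | Hg] Hp]]; eauto.
  - intros [Hp | [g [Hg Hp]]]; eauto.
Qed.

Record interpolant (G G' : list form) (D : option form) (chi : form) : Prop := {
  interpolant_left : G3iLL G (Some chi);
  interpolant_right : G3iLL (chi :: G') D;
  interpolant_atoms : forall p, In p (atoms chi) ->
    occurs_in_ctx p G /\ (occurs_in_ctx p G' \/ occurs_in_succ p D)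
}.

Lemma interpolant_perm {G G' H H' D chi} :
  Permutation G H -> Permutation G' H' -> interpolant G G' D chi -> interpolant H H' D chi.
Proof.
  intros HG HG' [Hl Hr Ha]; constructor.
  - exact (G3iLL_perm Hl HG).
  - apply (G3iLL_perm Hr). apply perm_skip, HG'.
  - intros p Hp. destruct (Ha p Hp) as [H1 [H2 | H2]];
      eauto using occurs_in_ctx_perm.
Qed.

Ltac solve_atoms :=
  let p := fresh "p" in
  intros p ?;
  repeat match goal with H : forall q : nat, _ |- _ => specialize (H p) end;
  repeat (rewrite ?occurs_in_ctx_cons, ?in_app_iff in *; simpl in *);
  tauto.

(* Suffix [_left] ([_right]): the principal formula of the rule lies in [G] ([G']). *)
Section Interpolants.

Variables (G G' : list form) (D : option form).

Lemma interpolant_Ax_left p : interpolant (Var p :: G) G' (Some (Var p)) (Var p).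
Proof.
  constructor.
  - apply (Ax G). reflexivity.
  - apply (Ax G'). reflexivity.
  - solve_atoms.
Qed.

Lemma interpolant_Ax_right p : interpolant G (Var p :: G') (Some (Var p)) Top.
Proof.
  constructor.
  - apply G3iLL_Top.
  - apply (Ax (Top :: G')). perm_solve.
  - solve_atoms.
Qed.

Lemma interpolant_Bot_left : interpolant (Bot :: G) G' D Bot.
Proof.
  constructor.
  - apply (LBot G). reflexivity.
  - apply (LBot G'). reflexivity.
  - solve_atoms.
Qed.

Lemma interpolant_Bot_right : interpolant G (Bot :: G') D Top.
Proof.
  constructor.
  - apply G3iLL_Top.
  - apply (LBot (Top :: G')). perm_solve.
  - solve_atoms.
Qed.

Lemma interpolant_RAnd a b c1 c2 :
  interpolant G G' (Some a) c1 -> interpolant G G' (Some b) c2 ->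
  interpolant G G' (Some (And a b)) (And c1 c2).
Proof.
  intros [Hl1 Hr1 Ha1] [Hl2 Hr2 Ha2]; constructor.
  - apply RAnd; assumption.
  - apply (LAnd G' _ c1 c2); [reflexivity|]. apply RAnd.
    + exchange (G3iLL_weaken c2 Hr1).
    + exchange (G3iLL_weaken c1 Hr2).
  - solve_atoms.
Qed.

Lemma interpolant_LAnd_left a b c :
  interpolant (a :: b :: G) G' D c -> interpolant (And a b :: G) G' D c.
Proof.
  intros [Hl Hr Ha]; constructor.
  - apply (LAnd G _ a b); [reflexivity | assumption].
  - assumption.
  - solve_atoms.
Qed.

Lemma interpolant_LAnd_right a b c :
  interpolant G (a :: b :: G') D c -> interpolant G (And a b :: G') D c.
Proof.
  intros [Hl Hr Ha]; constructor.
  - assumption.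
  - apply (LAnd (c :: G') _ a b); [perm_solve|]. exchange Hr.
  - solve_atoms.
Qed.

Lemma interpolant_ROr0 a b c :
  interpolant G G' (Some a) c -> interpolant G G' (Some (Or a b)) c.
Proof.
  intros [Hl Hr Ha]; constructor; [assumption | apply ROr0; assumption | solve_atoms].
Qed.

Lemma interpolant_ROr1 a b c :
  interpolant G G' (Some b) c -> interpolant G G' (Some (Or a b)) c.
Proof.
  intros [Hl Hr Ha]; constructor; [assumption | apply ROr1; assumption | solve_atoms].
Qed.

Lemma interpolant_LOr_left a b c1 c2 :
  interpolant (a :: G) G' D c1 -> interpolant (b :: G) G' D c2 ->
  interpolant (Or a b :: G) G' D (Or c1 c2).
Proof.
  intros [Hl1 Hr1 Ha1] [Hl2 Hr2 Ha2]; constructor.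
  - apply (LOr G _ a b); [reflexivity | apply ROr0 | apply ROr1]; assumption.
  - apply (LOr G' _ c1 c2); [reflexivity | |]; assumption.
  - solve_atoms.
Qed.

Lemma interpolant_LOr_right a b c1 c2 :
  interpolant G (a :: G') D c1 -> interpolant G (b :: G') D c2 ->
  interpolant G (Or a b :: G') D (And c1 c2).
Proof.
  intros [Hl1 Hr1 Ha1] [Hl2 Hr2 Ha2]; constructor.
  - apply RAnd; assumption.
  - apply (LAnd (Or a b :: G') _ c1 c2); [reflexivity|].
    apply (LOr (c1 :: c2 :: G') _ a b); [perm_solve| |].
    + exchange (G3iLL_weaken c2 Hr1).
    + exchange (G3iLL_weaken c1 Hr2).
  - solve_atoms.
Qed.

Lemma interpolant_RImp a b c :
  interpolant G (a :: G') (Some b) c -> interpolant G G' (Some (Imp a b)) c.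
Proof.
  intros [Hl Hr Ha]; constructor.
  - assumption.
  - apply RImp. exchange Hr.
  - solve_atoms.
Qed.

(* The left premise of L-> has [a] as succedent, so it is interpolated with the two sides exchanged. *)
Lemma interpolant_LImp_left a b c1 c2 :
  interpolant G' (Imp a b :: G) (Some a) c1 -> interpolant (b :: G) G' D c2 ->
  interpolant (Imp a b :: G) G' D (Imp c1 c2).
Proof.
  intros [Hl1 Hr1 Ha1] [Hl2 Hr2 Ha2]; constructor.
  - apply RImp. apply (LImp (c1 :: G) _ a b); [perm_solve| |].
    + exchange Hr1.
    + exchange (G3iLL_weaken c1 Hl2).
  - apply (LImp G' _ c1 c2); [reflexivity | apply G3iLL_weaken | ]; assumption.
  - solve_atoms.
Qed.

Lemma interpolant_LImp_right a b c1 c2 :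
  interpolant G (Imp a b :: G') (Some a) c1 -> interpolant G (b :: G') D c2 ->
  interpolant G (Imp a b :: G') D (And c1 c2).
Proof.
  intros [Hl1 Hr1 Ha1] [Hl2 Hr2 Ha2]; constructor.
  - apply RAnd; assumption.
  - apply (LAnd (Imp a b :: G') _ c1 c2); [reflexivity|].
    apply (LImp (c1 :: c2 :: G') _ a b); [perm_solve| |].
    + exchange (G3iLL_weaken c2 Hr1).
    + exchange (G3iLL_weaken c1 Hr2).
  - solve_atoms.
Qed.

Lemma interpolant_RCirc a c :
  interpolant G G' (Some a) c -> interpolant G G' (Some (Circ a)) c.
Proof.
  intros [Hl Hr Ha]; constructor; [assumption | apply RCirc; assumption | solve_atoms].
Qed.

Lemma interpolant_LCirc_left a b c :
  interpolant (b :: G) G' (Some (Circ a)) c ->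
  interpolant (Circ b :: G) G' (Some (Circ a)) (Circ c).
Proof.
  intros [Hl Hr Ha]; constructor.
  - apply (LCirc G _ c b); [reflexivity|]. apply RCirc; assumption.
  - apply (LCirc G' _ a c); [reflexivity | assumption].
  - solve_atoms.
Qed.

Lemma interpolant_LCirc_right a b c :
  interpolant G (b :: G') (Some (Circ a)) c ->
  interpolant G (Circ b :: G') (Some (Circ a)) c.
Proof.
  intros [Hl Hr Ha]; constructor.
  - assumption.
  - apply (LCirc (c :: G') _ a b); [perm_solve|]. exchange Hr.
  - solve_atoms.
Qed.

End Interpolants.

Lemma Permutation_cons_app_split {A} {x : A} {L G G'} :
  Permutation (x :: L) (G ++ G') ->
  (exists G1, Permutation (x :: G1) G /\ Permutation L (G1 ++ G')) \/
  (exists G1', Permutation (x :: G1') G' /\ Permutation L (G ++ G1')).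
Proof.
  intros HP.
  assert (Hx : In x (G ++ G')) by (apply (Permutation_in _ HP); left; reflexivity).
  apply in_app_or in Hx as [Hx | Hx]; apply in_split in Hx as (l1 & l2 & ->).
  - left. exists (l1 ++ l2). split; [apply Permutation_middle|].
    apply (Permutation_cons_inv (a := x)). rewrite HP, <- app_assoc.
    simpl. rewrite <- Permutation_middle, app_assoc. reflexivity.
  - right. exists (l1 ++ l2). split; [apply Permutation_middle|].
    apply (Permutation_cons_inv (a := x)). rewrite HP.
    rewrite <- !Permutation_middle. reflexivity.
Qed.

Definition interpolable (L : list form) (D : option form) : Prop :=
  forall G G', Permutation L (G ++ G') -> exists chi, interpolant G G' D chi.

Lemma interpolable_perm {L L' D} : Permutation L L' -> interpolable L D -> interpolable L' D.
Proof. intros HL HI G G' HP. apply HI. rewrite HL. exact HP. Qed.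

Lemma interpolable_Ax p L : interpolable (Var p :: L) (Some (Var p)).
Proof.
  intros G G' HP.
  destruct (Permutation_cons_app_split HP) as [[G1 [HG _]] | [G1 [HG' _]]]; eexists.
  - apply (interpolant_perm HG (Permutation_refl G')), interpolant_Ax_left.
  - apply (interpolant_perm (Permutation_refl G) HG'), interpolant_Ax_right.
Qed.

Lemma interpolable_LBot L D : interpolable (Bot :: L) D.
Proof.
  intros G G' HP.
  destruct (Permutation_cons_app_split HP) as [[G1 [HG _]] | [G1 [HG' _]]]; eexists.
  - apply (interpolant_perm HG (Permutation_refl G')), interpolant_Bot_left.
  - apply (interpolant_perm (Permutation_refl G) HG'), interpolant_Bot_right.
Qed.

Lemma interpolable_RAnd L a b :
  interpolable L (Some a) -> interpolable L (Some b) -> interpolable L (Some (And a b)).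
Proof.
  intros H1 H2 G G' HP.
  destruct (H1 G G' HP) as [c1 Hc1], (H2 G G' HP) as [c2 Hc2].
  exists (And c1 c2). apply interpolant_RAnd; assumption.
Qed.

Lemma interpolable_LAnd a b L D :
  interpolable (a :: b :: L) D -> interpolable (And a b :: L) D.
Proof.
  intros IH G G' HP.
  destruct (Permutation_cons_app_split HP) as [[G1 [HG HL]] | [G1 [HG' HL]]].
  - destruct (IH (a :: b :: G1) G') as [c Hc]; [rewrite HL; reflexivity|].
    exists c. apply (interpolant_perm HG (Permutation_refl G')), interpolant_LAnd_left, Hc.
  - destruct (IH G (a :: b :: G1)) as [c Hc]; [rewrite HL, <- !Permutation_middle; reflexivity|].
    exists c. apply (interpolant_perm (Permutation_refl G) HG'), interpolant_LAnd_right, Hc.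
Qed.

Lemma interpolable_ROr0 L a b : interpolable L (Some a) -> interpolable L (Some (Or a b)).
Proof.
  intros IH G G' HP. destruct (IH G G' HP) as [c Hc].
  exists c. apply interpolant_ROr0, Hc.
Qed.

Lemma interpolable_ROr1 L a b : interpolable L (Some b) -> interpolable L (Some (Or a b)).
Proof.
  intros IH G G' HP. destruct (IH G G' HP) as [c Hc].
  exists c. apply interpolant_ROr1, Hc.
Qed.

Lemma interpolable_LOr a b L D :
  interpolable (a :: L) D -> interpolable (b :: L) D -> interpolable (Or a b :: L) D.
Proof.
  intros IH1 IH2 G G' HP.
  destruct (Permutation_cons_app_split HP) as [[G1 [HG HL]] | [G1 [HG' HL]]].
  - destruct (IH1 (a :: G1) G') as [c1 Hc1]; [rewrite HL; reflexivity|].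
    destruct (IH2 (b :: G1) G') as [c2 Hc2]; [rewrite HL; reflexivity|].
    exists (Or c1 c2).
    apply (interpolant_perm HG (Permutation_refl G')), interpolant_LOr_left; assumption.
  - destruct (IH1 G (a :: G1)) as [c1 Hc1]; [rewrite HL; apply Permutation_middle|].
    destruct (IH2 G (b :: G1)) as [c2 Hc2]; [rewrite HL; apply Permutation_middle|].
    exists (And c1 c2).
    apply (interpolant_perm (Permutation_refl G) HG'), interpolant_LOr_right; assumption.
Qed.

Lemma interpolable_RImp L a b : interpolable (a :: L) (Some b) -> interpolable L (Some (Imp a b)).
Proof.
  intros IH G G' HP.
  destruct (IH G (a :: G')) as [c Hc]; [rewrite HP; apply Permutation_middle|].
  exists c. apply interpolant_RImp, Hc.
Qed.

Lemma interpolable_LImp a b L D :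
  interpolable (Imp a b :: L) (Some a) -> interpolable (b :: L) D ->
  interpolable (Imp a b :: L) D.
Proof.
  intros IH1 IH2 G G' HP.
  destruct (Permutation_cons_app_split HP) as [[G1 [HG HL]] | [G1 [HG' HL]]].
  - destruct (IH1 G' (Imp a b :: G1)) as [c1 Hc1].
    { rewrite HL, <- Permutation_middle. apply perm_skip, Permutation_app_comm. }
    destruct (IH2 (b :: G1) G') as [c2 Hc2]; [rewrite HL; reflexivity|].
    exists (Imp c1 c2).
    apply (interpolant_perm HG (Permutation_refl G')), interpolant_LImp_left; assumption.
  - destruct (IH1 G (Imp a b :: G1)) as [c1 Hc1]; [rewrite HL; apply Permutation_middle|].
    destruct (IH2 G (b :: G1)) as [c2 Hc2]; [rewrite HL; apply Permutation_middle|].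
    exists (And c1 c2).
    apply (interpolant_perm (Permutation_refl G) HG'), interpolant_LImp_right; assumption.
Qed.

Lemma interpolable_RCirc L a : interpolable L (Some a) -> interpolable L (Some (Circ a)).
Proof.
  intros IH G G' HP. destruct (IH G G' HP) as [c Hc].
  exists c. apply interpolant_RCirc, Hc.
Qed.

Lemma interpolable_LCirc a b L :
  interpolable (b :: L) (Some (Circ a)) -> interpolable (Circ b :: L) (Some (Circ a)).
Proof.
  intros IH G G' HP.
  destruct (Permutation_cons_app_split HP) as [[G1 [HG HL]] | [G1 [HG' HL]]].
  - destruct (IH (b :: G1) G') as [c Hc]; [rewrite HL; reflexivity|].
    exists (Circ c). apply (interpolant_perm HG (Permutation_refl G')), interpolant_LCirc_left, Hc.
  - destruct (IH G (b :: G1)) as [c Hc]; [rewrite HL; apply Permutation_middle|].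
    exists c. apply (interpolant_perm (Permutation_refl G) HG'), interpolant_LCirc_right, Hc.
Qed.

Lemma G3iLL_interpolable {L D} : G3iLL L D -> interpolable L D.
Proof.
  induction 1.
  - apply (interpolable_perm (Permutation_sym H)), interpolable_Ax.
  - apply (interpolable_perm (Permutation_sym H)), interpolable_LBot.
  - apply interpolable_RAnd; assumption.
  - apply (interpolable_perm (Permutation_sym H)), interpolable_LAnd; assumption.
  - apply interpolable_ROr0; assumption.
  - apply interpolable_ROr1; assumption.
  - apply (interpolable_perm (Permutation_sym H)), interpolable_LOr; assumption.
  - apply interpolable_RImp; assumption.
  - apply (interpolable_perm (Permutation_sym H)), interpolable_LImp; assumption.
  - apply interpolable_RCirc; assumption.
  - apply (interpolable_perm (Permutation_sym H)), interpolable_LCirc; assumption.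
Qed.

Theorem mainTheorem3 :
  forall (G G' : list form) (D : option form),
    G3iLL (G ++ G') D ->
    exists chi : form,
      G3iLL G (Some chi) /\
      G3iLL (G' ++ [chi]) D /\
      (forall p, In p (atoms chi) ->
         occurs_in_ctx p G /\ (occurs_in_ctx p G' \/ occurs_in_succ p D)).
Proof.
  intros G G' D HD.
  destruct (G3iLL_interpolable HD G G' (Permutation_refl _)) as [chi [Hl Hr Ha]].
  exists chi. split; [exact Hl|]. split; [|exact Ha].
  exact (G3iLL_perm Hr (Permutation_cons_append G' chi)).
Qed.
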